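(* Let $X$ be a finite set with $|X|\ge 4$ and let $\tau$ be a non-empty thin subset of $\binom{X}{3}$. Then there exists an unrooted caterpillar tree $T$ with leaf set $X$ for which the map ${\rm med}_T:\tau\to \mathring{V}(T)$, $s\mapsto{\rm med}_T(s)$, is one-to-one.
   Context: $L(\tau)=\bigcup_{s\in\tau}s$; $\tau\subseteq\binom{X}{3}$ is thin if $|L(\tau')|\ge|\tau'|+2$ for every non-empty $\tau'\subseteq\tau$. An unrooted phylogenetic $X$-tree is a tree whose leaves (degree-1 vertices) are bijectively labelled by $X$ and whose non-leaf vertices are unlabelled of degree at least 3; it is binary if all non-leaf vertices have degree 3. $\mathring{V}(T)$ denotes the set of interior (non-leaf) vertices. A cherry is a pair of leaves adjacent to a common vertex. An unrooted caterpillar tree on $X$ is an unrooted binary phylogenetic $X$-tree with at most 2 cherries. For $s=\{x,y,z\}$, ${\rm med}_T(s)$ is the unique vertex of $T$ lying on all three paths between pairs of $x,y,z$. *)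

From mathcomp Require Import all_boot.
Set Implicit Arguments. Unset Strict Implicit. Unset Printing Implicit Defensive.

Definition Lset (X : finType) (tau : {set {set X}}) : {set X} :=
  \bigcup_(s in tau) s.

Definition triples (X : finType) (tau : {set {set X}}) : Prop :=
  forall s, s \in tau -> #|s| = 3.

Definition thin (X : finType) (tau : {set {set X}}) : Prop :=
  forall tau' : {set {set X}}, tau' \subset tau -> tau' != set0 ->
    #|tau'| + 2 <= #|Lset tau'|.

Definition simple_graph (V : finType) (e : rel V) : Prop :=
  symmetric e /\ irreflexive e.

Definition gconnected (V : finType) (e : rel V) : Prop :=
  forall x y : V, connect e x y.

Definition acyclic (V : finType) (e : rel V) : Prop :=
  forall c : seq V, 3 <= size c -> uniq c -> ~~ cycle e c.

Definition is_tree (V : finType) (e : rel V) : Prop :=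
  [/\ simple_graph e, gconnected e & acyclic e].

Definition deg (V : finType) (e : rel V) (v : V) : nat := #|[set w | e v w]|.

Definition is_leaf (V : finType) (e : rel V) (v : V) : bool := deg e v == 1.

Definition phylo_tree (X V : finType) (e : rel V) (lab : X -> V) : Prop :=
  [/\ is_tree e, injective lab,
      (forall v, is_leaf e v = [exists x, lab x == v]) &
      (forall v, ~~ is_leaf e v -> 3 <= deg e v)].

Definition binary_phylo_tree (X V : finType) (e : rel V) (lab : X -> V) : Prop :=
  phylo_tree e lab /\ (forall v, ~~ is_leaf e v -> deg e v = 3).

Definition cherries (V : finType) (e : rel V) : {set {set V}} :=
  [set C : {set V} | [exists a, exists b,
     [&& C == [set a; b], a != b, is_leaf e a, is_leaf e b &
         [exists w, e a w && e b w]]]].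

Definition caterpillar (X V : finType) (e : rel V) (lab : X -> V) : Prop :=
  binary_phylo_tree e lab /\ #|cherries e| <= 2.

Definition on_path (V : finType) (e : rel V) (x y v : V) : Prop :=
  exists p : seq V, [/\ path e x p, last x p = y, uniq (x :: p) & v \in x :: p].

Definition is_med (X V : finType) (e : rel V) (lab : X -> V) (s : {set X}) (v : V) : Prop :=
  forall x y, x \in s -> y \in s -> x != y -> on_path e (lab x) (lab y) v.

From mathcomp Require Import all_boot zify.
Set Implicit Arguments. Unset Strict Implicit. Unset Printing Implicit Defensive.

(* In a caterpillar whose leaves are listed x_0, ..., x_{n-1} along the spine,
   the median of a triple x_a, x_b, x_c with a < b < c is the spine vertex
   carrying x_b, and these spine vertices are distinct for 0 < b < n-1.  So it
   suffices to order X so that the middle elements of the triples of tau are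
   pairwise distinct.  The order is built from the top down.  Removing the top
   element turns the triples through it into pairs, and the middle element of
   a pair is its top.  If there is no pair, any point can go on top.
   Otherwise, call a subfamily J tight when |L(J)| = |J| + 1.  By
   submodularity, tight families through a common point have a tight union.
   A maximality argument then yields a point y of a pair q such that every
   tight subfamily covering y contains q.  Putting y on top and discarding q
   preserves the thinness condition, extended to pairs, and makes y the
   middle of q only. *)

Section ThinFamily.
Variables X I : finType.
Implicit Types (F : I -> {set X}) (S J K A B : {set I}) (r : X -> nat) (s : {set X}).

Definition Lfam F J : {set X} := \bigcup_(i in J) F i.

Definition all_triples F J : bool := [forall i in J, #|F i| == 3].

(* Deleting a point x from every set of a thin family of triples turns the
   triples through x into pairs; [thin_family] is the condition that survives
   such deletions.  Families are indexed because deletions may identify sets. *)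
Definition thin_family F S : Prop :=
  (forall i, i \in S -> (#|F i| == 2) || (#|F i| == 3)) /\
  (forall J, J \subset S -> J != set0 -> #|J|.+1 + all_triples F J <= #|Lfam F J|).

Definition tight F J : bool := (J != set0) && (#|Lfam F J| <= #|J|.+1).

Definition peelable F S y q : Prop := [/\ q \in S, #|F q| = 2, y \in F q &
  forall J, J \subset S -> tight F J -> y \in Lfam F J -> q \in J].

Lemma LfamU F A B : Lfam F (A :|: B) = Lfam F A :|: Lfam F B.
Proof. exact: bigcup_setU. Qed.

Lemma LfamS F A B : A \subset B -> Lfam F A \subset Lfam F B.
Proof. by move=> sAB; apply/bigcupsP => i iA; apply: bigcup_sup (subsetP sAB i iA). Qed.

Lemma Lfam1 F i : Lfam F [set i] = F i.
Proof. exact: big_set1. Qed.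

Lemma mem_Lfam F J i x : i \in J -> x \in F i -> x \in Lfam F J.
Proof. by move=> iJ xi; apply/bigcupP; exists i. Qed.

Lemma LfamD1 F J x : Lfam (fun i => F i :\ x) J = Lfam F J :\ x.
Proof.
apply/setP => z; rewrite in_setD1; apply/bigcupP/andP => [[i iJ]|[zx /bigcupP[i iJ zi]]].
  by rewrite in_setD1 => /andP[zx zi]; split=> //; apply: mem_Lfam zi.
by exists i; rewrite // in_setD1 zx.
Qed.

Lemma thin_family_sub F S A : thin_family F S -> A \subset S -> thin_family F A.
Proof.
move=> [sizeS coverS] sAS; split=> [i iA|J sJA]; first exact/sizeS/(subsetP sAS).
exact/coverS/(subset_trans sJA).
Qed.

Lemma thin_family_card F S J : thin_family F S -> J \subset S -> J != set0 ->
  #|J|.+1 <= #|Lfam F J|.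
Proof. by move=> [_ coverS] sJS nJ; have := coverS J sJS nJ; lia. Qed.

Section Tight.
Variables (F : I -> {set X}) (S : {set I}).
Hypothesis thinS : thin_family F S.

Lemma Lfam_meet_card K A y : K \subset S -> y \in Lfam F K -> y \in Lfam F A ->
  #|K :&: A|.+1 <= #|Lfam F K :&: Lfam F A|.
Proof.
move=> sKS yK yA; have [->|nKA] := eqVneq (K :&: A) set0.
  by rewrite cards0; apply/card_gt0P; exists y; rewrite inE yK yA.
apply: leq_trans (thin_family_card thinS (subset_trans (subsetIl K A) sKS) nKA) _.
by apply: subset_leq_card; rewrite subsetI !LfamS ?subsetIl ?subsetIr.
Qed.

Lemma tight_meet_card K A : K \subset S -> A \subset S -> tight F K -> tight F A ->
  #|Lfam F K :&: Lfam F A| <= #|K :&: A|.+1.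
Proof.
move=> sKS sAS /andP[nK tK] /andP[_ tA].
have sKAS : K :|: A \subset S by rewrite subUset sKS sAS.
have nKA : K :|: A != set0 by rewrite setU_eq0 negb_and nK.
have := thin_family_card thinS sKAS nKA; rewrite LfamU.
have := cardsUI (Lfam F K) (Lfam F A); have := cardsUI K A; lia.
Qed.

Lemma tightU K A y : K \subset S -> A \subset S -> tight F K -> tight F A ->
  y \in Lfam F K -> y \in Lfam F A -> tight F (K :|: A).
Proof.
move=> sKS sAS /andP[nK tK] /andP[_ tA] yK yA.
rewrite /tight setU_eq0 negb_and nK LfamU /=.
have := Lfam_meet_card sKS yK yA.
have := cardsUI (Lfam F K) (Lfam F A); have := cardsUI K A; lia.
Qed.

Lemma tightI K A y w : K \subset S -> A \subset S -> tight F K -> tight F A ->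
  y \in Lfam F K -> y \in Lfam F A -> w \in Lfam F K -> w \in Lfam F A -> y != w ->
  tight F (K :&: A) /\ y \in Lfam F (K :&: A).
Proof.
move=> sKS sAS tK tA yK yA wK wA yw.
have meetKA := tight_meet_card sKS sAS tK tA.
have sLKA : Lfam F (K :&: A) \subset Lfam F K :&: Lfam F A.
  by rewrite subsetI !LfamS ?subsetIl ?subsetIr.
have two_common : 2 <= #|Lfam F K :&: Lfam F A|.
  have <- : #|[set y; w]| = 2 by rewrite cards2 yw.
  apply: subset_leq_card; apply/subsetP => z.
  by rewrite !inE => /orP[] /eqP->; rewrite ?yK ?yA ?wK.
have nKA : K :&: A != set0 by apply: contraTneq meetKA => ->; rewrite cards0 -ltnNge.
have lbKA := thin_family_card thinS (subset_trans (subsetIl K A) sKS) nKA.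
split; first by rewrite /tight nKA (leq_trans (subset_leq_card sLKA) meetKA).
apply: contraT => yNKA.
have : #|y |: Lfam F (K :&: A)| <= #|Lfam F K :&: Lfam F A|.
  by apply: subset_leq_card; rewrite subUset sLKA sub1set inE yK yA.
by rewrite cardsU1 yNKA add1n => /leq_trans/(_ meetKA); rewrite ltnS leqNgt lbKA.
Qed.

Lemma tight_has_pair J : J \subset S -> tight F J -> exists2 i, i \in J & #|F i| = 2.
Proof.
move=> sJS /andP[nJ tJ]; have [sizeS coverS] := thinS.
have := coverS J sJS nJ; have [_|] := boolP (all_triples F J); first lia.
move=> /forall_inPn[i iJ /negbTE Fi3] _; exists i => //.
by have /orP[/eqP|] := sizeS i (subsetP sJS i iJ); rewrite ?Fi3.
Qed.

Lemma tight_coverNsub A p : p \in S -> A \subset S -> p \notin A -> tight F A ->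
  ~~ (F p \subset Lfam F A).
Proof.
move=> pS sAS pA /andP[nA tA]; apply/negP => sFp.
have sApS : p |: A \subset S by rewrite subUset sub1set pS sAS.
have nApS : p |: A != set0 by apply/set0Pn; exists p; rewrite setU11.
have := thin_family_card thinS sApS nApS.
by rewrite setUC LfamU Lfam1 (setUidPl sFp) setUC cardsU1 pA; lia.
Qed.

Definition max_tight_avoiding p w A : Prop :=
  [/\ A \subset S, p \notin A, tight F A, w \in Lfam F A &
      forall K, K \subset S -> tight F K -> w \in Lfam F K -> p \notin K -> K \subset A].

Lemma max_tight_avoiding_exists p w K : K \subset S -> tight F K ->
  w \in Lfam F K -> p \notin K -> exists A, max_tight_avoiding p w A.
Proof.
move=> sKS tK wK pK.
pose P A := [&& A \subset S, tight F A, w \in Lfam F A & p \notin A].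
have PK : P K by apply/and4P.
case: (arg_maxnP (fun A => #|A|) PK) => A /and4P[sAS tA wA pA] maxA.
exists A; split => // K' sK'S tK' wK' pK'.
have PK'A : P (K' :|: A).
  by rewrite /P subUset sK'S sAS (tightU sK'S sAS tK' tA wK' wA) LfamU inE wK' !inE negb_or pK'.
have /eqP-> : A == K' :|: A by rewrite eqEcard subsetUr; exact: maxA.
exact: subsetUl.
Qed.

Lemma peelable_lift p w A y q : p \in S -> w \in F p -> max_tight_avoiding p w A ->
  y \in Lfam F A -> y != w -> peelable F A y q -> peelable F S y q.
Proof.
move=> pS wp [sAS pA tA wA maxA] yA yw [qA q2 yq peelA].
split => //; first exact: subsetP sAS q qA.
move=> K sKS tK yK; have [wK|wNK] := boolP (w \in Lfam F K).
  have [tKA yKA] := tightI sKS sAS tK tA yK yA wK wA yw.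
  by have := peelA _ (subsetIr K A) tKA yKA; rewrite inE => /andP[].
have pK : p \notin K by apply: contra wNK => pK; apply: mem_Lfam pK wp.
apply: (peelA _ _ tK yK); apply: subset_trans (subsetUl K A) (maxA _ _ _ _ _).
- by rewrite subUset sKS sAS.
- exact: tightU sKS sAS tK tA yK yA.
- by rewrite LfamU inE wA orbT.
- by rewrite !inE negb_or pK.
Qed.

(* Where the peelable point obtained from the end [w] of the pair [p] lies. *)
Definition near_peel p w y : Prop :=
  y = w \/ exists2 A, max_tight_avoiding p w A & y \in Lfam F A.

Lemma near_peel_disjoint p u v y : p \in S -> F p = [set u; v] -> u != v ->
  near_peel p u y -> near_peel p v y -> False.
Proof.
move=> pS Fp uv nu nv.
have coverNFp A u' v' : max_tight_avoiding p u' A -> u' \in Lfam F A -> v' \in Lfam F A ->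
    [set u'; v'] = [set u; v] -> False.
  move=> [sAS pA tA _ _] u'A v'A Fp'; have := tight_coverNsub pS sAS pA tA.
  by rewrite Fp -Fp'; apply/negP/negPn/subsetP => z; rewrite !inE => /orP[] /eqP->.
case: nu nv => [->|[Au maxAu yAu]] [yv|[Av maxAv yAv]].
- by move: uv; rewrite yv eqxx.
- by apply: (coverNFp Av v u) => //; [case: maxAv | rewrite setUC].
- by apply: (coverNFp Au u v) => //; [case: maxAu | rewrite -yv].
case: (maxAu) => sAuS pAu tAu uAu maxu; case: (maxAv) => sAvS pAv tAv vAv _.
have sAvAu : Av \subset Au.
  apply: subset_trans (subsetUr Au Av) (maxu _ _ _ _ _).
  - by rewrite subUset sAuS sAvS.
  - exact: tightU sAuS sAvS tAu tAv yAu yAv.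
  - by rewrite LfamU inE uAu.
  - by rewrite !inE negb_or pAu.
exact: (coverNFp Au u v) uAu (subsetP (LfamS F sAvAu) v vAv) _.
Qed.

End Tight.

(* Two points are needed so that the induction can avoid a prescribed one. *)
Lemma exists_two_peelable F S : thin_family F S -> (exists2 p, p \in S & #|F p| = 2) ->
  exists y1 y2 q1 q2, [/\ y1 != y2, peelable F S y1 q1 & peelable F S y2 q2].
Proof.
have [n] := ubnP #|S|; elim: n S => // n IH S ltS thinS [p pS p2].
have near w : w \in F p -> exists y q, peelable F S y q /\ near_peel F S p w y.
  move=> wp.
  case: (pickP [pred K : {set I} | [&& K \subset S, tight F K, w \in Lfam F K & p \notin K]]);
    last first.
    move=> noK; exists w, p; split; last by left.
    split=> // J sJS tJ wJ; apply: contraT => pJ.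
    by have /= := noK J; rewrite sJS tJ wJ pJ.
  move=> K /and4P[sKS tK wK pK].
  have [A maxA] := max_tight_avoiding_exists thinS sKS tK wK pK.
  have [sAS pA tA _ _] := maxA.
  have ltAS : #|A| < #|S| by apply/proper_card/properP; split=> //; exists p.
  have ltA : #|A| < n := leq_trans ltAS (ltnSE ltS).
  have [i iA i2] := tight_has_pair thinS sAS tA.
  have [y1 [y2 [q1 [q2 [y12 peel1 peel2]]]]] :=
    IH A ltA (thin_family_sub thinS sAS) (ex_intro2 _ _ i iA i2).
  have [y [q [yw peelA]]] : exists y q, y != w /\ peelable F A y q.
    have [y1w|] := eqVneq y1 w; last by exists y1, q1.
    by exists y2, q2; rewrite -y1w eq_sym.
  have yA : y \in Lfam F A by case: peelA => qA _ yq _; apply: mem_Lfam yq.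
  exists y, q; split; first exact (peelable_lift thinS pS wp maxA yA yw peelA).
  by right; exists A.
have [u [v [uv Fp]]] := cards2P _ (introT eqP p2).
have [uFp vFp] : u \in F p /\ v \in F p by rewrite Fp !inE !eqxx orbT.
have [yu [qu [peelu nearu]]] := near u uFp.
have [yv [qv [peelv nearv]]] := near v vFp.
exists yu, yv, qu, qv; split=> //; apply/eqP => yuv.
by rewrite -yuv in nearv; exact (near_peel_disjoint thinS pS Fp uv nearu nearv).
Qed.

Lemma thin_family_delete F S S' x : thin_family F S -> S' \subset S ->
  (forall i, i \in S' -> x \in F i -> #|F i| = 3) ->
  (forall J, J \subset S' -> J != set0 -> x \in Lfam F J -> #|J|.+2 <= #|Lfam F J|) ->
  thin_family (fun i => F i :\ x) S'.
Proof.
move=> [sizeS coverS] sS'S x_triples x_slack; split=> [i iS'|J sJS' nJ].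
  have := cardsD1 x (F i); have [xFi|xNFi] := boolP (x \in F i).
    by rewrite x_triples // => /eqP; rewrite eqSS => /eqP <-.
  by rewrite add0n => <-; apply/sizeS/(subsetP sS'S).
rewrite LfamD1; have := cardsD1 x (Lfam F J).
have [xJ|xNJ] := boolP (x \in Lfam F J).
  have /negbTE-> : ~~ all_triples (fun i => F i :\ x) J.
    apply/forall_inPn; have /bigcupP[i iJ xFi] := xJ; exists i => //.
    by have := cardsD1 x (F i); rewrite xFi x_triples ?(subsetP sJS') //; lia.
  by have := x_slack J sJS' nJ xJ; lia.
have same_card i : i \in J -> #|F i :\ x| = #|F i|.
  by move=> iJ; rewrite [RHS](cardsD1 x) (negbTE (contra (mem_Lfam iJ) xNJ)).
have -> : all_triples (fun i => F i :\ x) J = all_triples F J.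
  by apply: eq_forallb_in => i iJ; rewrite same_card.
rewrite add0n => <-.
exact/coverS/nJ/(subset_trans sJS').
Qed.

Lemma thin_family_peel F S y q : thin_family F S -> peelable F S y q ->
  thin_family (fun i => F i :\ y) (S :\ q).
Proof.
move=> thinS [qS q2 yq peelS]; have sS'S := subD1set S q.
have qNS' J : J \subset S :\ q -> q \notin J.
  by move=> sJS'; apply/negP => /(subsetP sJS'); rewrite !inE eqxx.
apply: (thin_family_delete thinS sS'S) => [i iS' yFi|J sJS' nJ yJ].
  have /orP[/eqP Fi2|/eqP //] := thinS.1 i (subsetP sS'S i iS').
  have tight_i : tight F [set i].
    by rewrite /tight Lfam1 Fi2 cards1 andbT; apply/set0Pn; exists i; rewrite set11.
  have iS := subsetP sS'S i iS'.
  have := peelS [set i]; rewrite sub1set iS Lfam1 inE => /(_ isT tight_i yFi) /eqP qi.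
  by move: iS'; rewrite qi !inE eqxx.
rewrite ltnNge; apply/negP => tJ; have /negP := qNS' J sJS'; apply.
by apply: peelS yJ; [exact: subset_trans sJS' sS'S | rewrite /tight nJ].
Qed.

Lemma thin_family_delete_triples F S y : thin_family F S ->
  {in S, forall i, #|F i| = 3} -> thin_family (fun i => F i :\ y) S.
Proof.
move=> thinS S_triples; apply: (thin_family_delete thinS (subxx S)) => [i iS _|J sJS nJ _].
  exact: S_triples.
have := thinS.2 J sJS nJ.
have -> : all_triples F J by apply/forall_inP => i /(subsetP sJS) /S_triples ->.
by rewrite addn1.
Qed.

Definition is_second (r : X -> nat) (s : {set X}) (m : X) : bool :=
  (m \in s) && (#|[set w in s | r w < r m]| == 1).

Definition distinct_seconds F S (r : X -> nat) (md : I -> X) : Prop :=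
  {in S, forall i, is_second r (F i) (md i)} /\ {in S &, injective md}.

Definition rank_top (r : X -> nat) (y : X) (z : X) : nat :=
  if z == y then (\max_(x : X) r x).+1 else r z.

Lemma rank_top_inj r y : injective r -> injective (rank_top r y).
Proof.
move=> r_inj a b; rewrite /rank_top.
have above x : r x < (\max_(z : X) r z).+1 by rewrite ltnS leq_bigmax.
have [->|ay] := eqVneq a y; have [->|b_y] := eqVneq b y => //.
- by move=> rb; have := above b; rewrite -rb ltnn.
- by move=> ra; have := above a; rewrite ra ltnn.
- exact: r_inj.
Qed.

Lemma is_second_rank_top r y s m : m != y ->
  is_second (rank_top r y) s m = is_second r (s :\ y) m.
Proof.
move=> my; rewrite /is_second in_setD1 my /=.
suff -> : [set w in s | rank_top r y w < rank_top r y m] = [set w in s :\ y | r w < r m] by [].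
apply/setP => w; rewrite !inE /rank_top (negbTE my).
have [->|wy] //= := eqVneq w y.
by rewrite ltnNge (leq_trans (leq_bigmax m)) ?andbF.
Qed.

Lemma is_second_rank_top_self r y s : y \in s ->
  is_second (rank_top r y) s y = (#|s| == 2).
Proof.
move=> ys; rewrite /is_second ys (cardsD1 y s) ys add1n eqSS /=.
suff -> : [set w in s | rank_top r y w < rank_top r y y] = s :\ y by [].
apply/setP => w; rewrite !inE /rank_top eqxx.
by have [->|wy] /= := eqVneq w y; rewrite ?ltnn ?andbF // ltnS leq_bigmax andbT.
Qed.

Lemma distinct_seconds_rank_top F S r md y :
  distinct_seconds (fun i => F i :\ y) S r md -> distinct_seconds F S (rank_top r y) md.
Proof.
move=> [second_md md_inj]; split=> // i iS; have := second_md i iS.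
have [mdy|mdNy] := eqVneq (md i) y; first by rewrite /is_second mdy setD11.
by rewrite is_second_rank_top.
Qed.

Lemma distinct_seconds_rank_top_pair F S r md y q : q \in S -> #|F q| = 2 -> y \in F q ->
  distinct_seconds (fun i => F i :\ y) (S :\ q) r md ->
  distinct_seconds F S (rank_top r y) (fun i => if i == q then y else md i).
Proof.
move=> qS q2 yq [second_md md_inj].
have mdNy i : i \in S :\ q -> md i != y.
  by move=> iS'; apply: contraTneq (second_md i iS') => ->; rewrite /is_second setD11.
split=> [i iS|i j iS jS] /=.
  have [->|iq] := eqVneq i q; first by rewrite is_second_rank_top_self ?q2.
  by rewrite is_second_rank_top ?second_md ?mdNy // !inE iq.
have [iq|iq] := eqVneq i q; have [jq|jq] := eqVneq j q; rewrite ?iq ?jq //.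
- by move/esym/eqP; rewrite (negbTE (mdNy j _)) // !inE jq.
- by move/eqP; rewrite (negbTE (mdNy i _)) // !inE iq.
- by apply: md_inj; rewrite !inE ?iq ?jq.
Qed.

Lemma distinct_seconds_exists (x0 : X) F S : thin_family F S ->
  exists r, injective r /\ exists md, distinct_seconds F S r md.
Proof.
have [n] := ubnP #|Lfam F S|; elim: n F S => // n IH F S ltS thinS.
have [->|nS] := eqVneq S set0.
  exists (fun z => enum_rank z : nat); split; first by move=> a b /val_inj/enum_rank_inj.
  by exists (fun=> x0); split=> i; rewrite inE.
have smaller y S' : y \in Lfam F S -> S' \subset S -> #|Lfam (fun i => F i :\ y) S'| < n.
  move=> yS sS'S; rewrite LfamD1; have := cardsD1 y (Lfam F S); rewrite yS.
  by have := subset_leq_card (setSD [set y] (LfamS F sS'S)); lia.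
have [/exists_inP[p pS /eqP p2]|no_pair] := boolP [exists p in S, #|F p| == 2].
  have [y [_ [q [_ [_ peel _]]]]] := exists_two_peelable thinS (ex_intro2 _ _ p pS p2).
  have [qS q2 yq _] := peel.
  have [r [r_inj [md seconds]]] :=
    IH _ _ (smaller y _ (mem_Lfam qS yq) (subD1set S q)) (thin_family_peel thinS peel).
  exists (rank_top r y); split; first exact: rank_top_inj.
  by eexists; apply: distinct_seconds_rank_top_pair seconds.
have S_triples : {in S, forall i, #|F i| = 3}.
  move=> i iS; have /orP[/eqP Fi2|/eqP //] := thinS.1 i iS.
  by case/exists_inP: no_pair; exists i; rewrite ?Fi2.
have [i iS] := set0Pn _ nS; have [y yFi] : exists y, y \in F i.
  by apply/card_gt0P; rewrite S_triples.
have [r [r_inj [md seconds]]] :=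
  IH _ _ (smaller y _ (mem_Lfam iS yFi) (subxx S)) (thin_family_delete_triples y thinS S_triples).
exists (rank_top r y); split; first exact: rank_top_inj.
by exists md; apply: distinct_seconds_rank_top.
Qed.

End ThinFamily.

Lemma card_set3 (T : finType) (a b c : T) : a != b -> a != c -> b != c ->
  #|[set a; b; c]| = 3.
Proof. by move=> ab ac bc; rewrite -setUA cardsU1 cards2 !inE negb_or ab ac bc. Qed.

Lemma cycle_two_neighbours (T : eqType) (e : rel T) c x : symmetric e ->
  cycle e c -> uniq c -> 3 <= size c -> x \in c ->
  exists y z, [/\ y != z, y \in c, z \in c, e x y & e x z].
Proof.
move=> e_sym cycle_c uniq_c size_c xc; case: (rot_to xc) => i s c_rot.
have mem_c w : w \in x :: s -> w \in c by rewrite -c_rot mem_rot.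
move: (size_c) (cycle_c) (uniq_c); rewrite -(size_rot i) -(rot_cycle i) -(rot_uniq i) c_rot.
case: s mem_c {c_rot} => [|y [|b s]] //= mem_c _.
rewrite rcons_path => /and3P[exy _ /andP[_ ezx]] /and3P[_ yNbs _].
exists y, (last b s); split.
- by apply: contraNneq yNbs => ->; exact: mem_last.
- by apply: mem_c; rewrite !inE eqxx orbT.
- by apply: mem_c; have := mem_last b s; rewrite !inE => ->; rewrite !orbT.
- exact: exy.
- by rewrite e_sym.
Qed.

Section Caterpillar.
Variable k : nat.

(* Leaves [inl i] (i < k+4) and spine vertices [inr j] (j < k+2); leaf i hangs
   from spine vertex [minn i.-1 k.+1], so leaves 0, 1 and k+2, k+3 are the two
   cherries. *)
Definition cat_vertex := ('I_k.+4 + 'I_k.+2)%type.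

Definition spine_of (i : nat) : nat := minn i.-1 k.+1.

Definition cat_edge (u w : cat_vertex) : bool :=
  match u, w with
  | inl i, inr j | inr j, inl i => spine_of i == j
  | inr j, inr j' => (j.+1 == j') || (j'.+1 == j)
  | _, _ => false
  end.

Definition level (v : cat_vertex) : nat :=
  match v with inl i => spine_of i | inr j => j end.

Definition on_spine (v : cat_vertex) (t : nat) : bool :=
  match v with inr j => j == t :> nat | _ => false end.

Lemma cat_edge_sym : symmetric cat_edge.
Proof. by case=> a [] b //=; rewrite orbC. Qed.

Lemma cat_edge_irr : irreflexive cat_edge.
Proof. by case=> a //=; apply/negP => /orP[] /eqP; lia. Qed.

Lemma cat_edge_level u w : cat_edge u w -> level w = level u \/
  [/\ on_spine u (level u), on_spine w (level w) &
      level w = (level u).+1 \/ level u = (level w).+1].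
Proof.
case: u w => a [] b //=; try by move=> /eqP->; left.
by move=> /orP[] /eqP <-; right; rewrite !eqxx; split; auto.
Qed.

Lemma on_spine_inj u w t : on_spine u t -> on_spine w t -> u = w.
Proof.
by case: u w => // a [] // b /= /eqP ea /eqP eb; congr inr; apply: val_inj; rewrite /= ea eb.
Qed.

Lemma path_level_le_avoid p u K : path cat_edge u p -> level u <= K ->
  {in p, forall w, ~~ on_spine w K.+1} -> {in p, forall w, level w <= K}.
Proof.
elim: p u => // a p IH u /= /andP[ua pa] uK avoid.
have aK : level a <= K.
  case: (cat_edge_level ua) => [->//|[_ a_sp [aS|]]]; last lia.
  rewrite leqNgt; apply/negP => Ka; have := avoid a (mem_head a p).
  by rewrite (_ : K.+1 = level a) ?a_sp //; lia.
have sub_p : {subset p <= a :: p} by move=> w wp; rewrite inE wp orbT.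
by move=> w /predU1P[->//|]; apply: IH pa aK (sub_in1 sub_p avoid) w.
Qed.

Lemma path_level_ge_avoid p u K : path cat_edge u p -> K.+1 <= level u ->
  {in p, forall w, ~~ on_spine w K} -> {in p, forall w, K.+1 <= level w}.
Proof.
elim: p u => // a p IH u /= /andP[ua pa] uK avoid.
have aK : K.+1 <= level a.
  case: (cat_edge_level ua) => [->//|[_ a_sp [|aS]]]; first lia.
  rewrite leqNgt; apply/negP => Ka; have := avoid a (mem_head a p).
  by rewrite (_ : K = level a) ?a_sp //; lia.
have sub_p : {subset p <= a :: p} by move=> w wp; rewrite inE wp orbT.
by move=> w /predU1P[->//|]; apply: IH pa aK (sub_in1 sub_p avoid) w.
Qed.

Lemma path_level_le p u K : path cat_edge u p -> uniq (u :: p) ->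
  level u <= K -> level (last u p) <= K -> {in p, forall w, level w <= K}.
Proof.
elim: p u => // a p IH u /= /andP[ua pa] /andP[uNp uniq_p] uK lastK.
have aK : level a <= K.
  rewrite leqNgt; apply/negP => Ka.
  have [|[u_sp _ [aS|]]] := cat_edge_level ua; try lia.
  have avoid : {in p, forall w, ~~ on_spine w K}.
    move=> w wp; apply: contra uNp => w_sp.
    have uK' : level u = K by lia.
    by rewrite (on_spine_inj (_ : on_spine u K) w_sp) ?inE ?wp ?orbT // -uK'.
  have /predU1P[lastE|lastp] := mem_last a p; first by move: lastK; rewrite lastE; lia.
  by have := leq_trans (path_level_ge_avoid pa Ka avoid lastp) lastK; rewrite ltnn.
by move=> w /predU1P[->//|]; apply: IH pa uniq_p aK lastK w.
Qed.

Lemma path_level_ge p u K : path cat_edge u p -> uniq (u :: p) ->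
  K <= level u -> K <= level (last u p) -> {in p, forall w, K <= level w}.
Proof.
elim: p u => // a p IH u /= /andP[ua pa] /andP[uNp uniq_p] uK lastK.
have aK : K <= level a.
  rewrite leqNgt; apply/negP => Ka.
  have [|[u_sp _ [|uS]]] := cat_edge_level ua; try lia.
  have avoid : {in p, forall w, ~~ on_spine w (level a).+1}.
    move=> w wp; apply: contra uNp => w_sp.
    by rewrite (on_spine_inj (_ : on_spine u (level a).+1) w_sp) ?inE ?wp ?orbT // -uS.
  have /predU1P[lastE|lastp] := mem_last a p; first by move: lastK; rewrite lastE; lia.
  by have := leq_trans lastK (path_level_le_avoid pa (leqnn _) avoid lastp); rewrite leqNgt Ka.
by move=> w /predU1P[->//|]; apply: IH pa uniq_p aK lastK w.
Qed.

Lemma path_leaf_last p u d : path cat_edge u p -> uniq (u :: p) -> inl d \in p ->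
  last u p = inl d.
Proof.
elim: p u => // a p IH u /= /andP[ua pa] /andP[uNp uniq_p].
case/predU1P => [ad|]; last exact: IH pa uniq_p.
subst a; case: p pa uNp {IH uniq_p} => // b p /= /andP[db _].
case: u ua => // j; case: b db => // j' /= /eqP dj' /eqP dj.
have -> : j = j' by apply: val_inj; rewrite /= -dj -dj'.
by rewrite !inE eqxx orbT.
Qed.

Lemma on_path_leaves (a b : 'I_k.+4) v : on_path cat_edge (inl a) (inl b) v ->
  [\/ v = inl a, v = inl b |
      (exists j, v = inr j) /\
      minn (spine_of a) (spine_of b) <= level v <= maxn (spine_of a) (spine_of b)].
Proof.
case=> p [ap last_p uniq_p]; case/predU1P => [->|vp]; first exact: Or31.
case: v vp => [d|j] vp.
  by apply: Or32; rewrite -(path_leaf_last ap uniq_p vp) last_p.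
apply: Or33; split; first by exists j.
have last_level : level (last (inl a) p) = spine_of b by rewrite last_p.
apply/andP; split.
  by apply: (path_level_ge ap uniq_p (geq_minl _ _)) vp; rewrite last_level geq_minr.
by apply: (path_level_le ap uniq_p (leq_maxl _ _)) vp; rewrite last_level leq_maxr.
Qed.

Lemma median_leaves_level (a b c : 'I_k.+4) v : a < b -> b < c ->
  on_path cat_edge (inl a) (inl b) v -> on_path cat_edge (inl b) (inl c) v ->
  on_path cat_edge (inl a) (inl c) v -> level v = spine_of b.
Proof.
move=> ab bc path_ab path_bc path_ac.
have inl_neq (x y : 'I_k.+4) : x < y -> inl x <> inl y :> cat_vertex.
  by move=> xy [] exy; move: xy; rewrite exy ltnn.
have ac := ltn_trans ab bc.
case: (on_path_leaves path_ab) => [va|vb|[[j vj] vab]].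
- move: (on_path_leaves path_bc); rewrite va.
  by case=> [/(inl_neq _ _ ab)|/(inl_neq _ _ ac)|[[]]].
- move: (on_path_leaves path_ac); rewrite vb.
  by case=> [/esym/(inl_neq _ _ ab)|/(inl_neq _ _ bc)|[[]]].
subst v; case: (on_path_leaves path_bc) => [//|//|[_ vbc]].
move: vab vbc; rewrite /spine_of /=; lia.
Qed.

Lemma spine_of_lt i : spine_of i < k.+2.
Proof. rewrite /spine_of; lia. Qed.

Lemma connect_spine0 v : connect cat_edge v (inr ord0).
Proof.
have spine j (hj : j < k.+2) : connect cat_edge (inr (Ordinal hj)) (inr ord0).
  elim: j hj => [|j IH] hj; first by rewrite (_ : Ordinal hj = ord0) //; apply: val_inj.
  by apply: connect_trans (IH (ltnW hj)); apply: connect1; rewrite /= eqxx orbT.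
case: v => [i|[j hj]]; last exact: spine.
by apply: connect_trans (spine _ (spine_of_lt i)); apply: connect1 => /=.
Qed.

Lemma cat_connected : gconnected cat_edge.
Proof.
move=> x y; apply: connect_trans (connect_spine0 x) _.
by rewrite (sym_connect_sym cat_edge_sym) connect_spine0.
Qed.

(* A leaf has a single neighbour, and a spine vertex of maximal level on a
   cycle would need two distinct neighbours below it. *)
Lemma cat_acyclic : acyclic cat_edge.
Proof.
move=> c size_c uniq_c; apply/negP => cycle_c.
have two_nbrs := cycle_two_neighbours cat_edge_sym cycle_c uniq_c size_c.
have no_leaf d : inl d \notin c.
  apply/negP => /two_nbrs[y [z [yz _ _]]].
  case: y yz => // j; case: z => // j' jj' /eqP dj /eqP dj'.
  by case/eqP: jj'; congr inr; apply: val_inj; rewrite /= -dj -dj'.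
have [x0 x0c] : exists x0, x0 \in c.
  by case: c size_c {uniq_c cycle_c two_nbrs no_leaf} => // x0; exists x0; rewrite mem_head.
case: (@arg_maxnP _ x0 [pred v | v \in c] level x0c) => -[d|j] /= xc x_max.
  by rewrite (negbTE (no_leaf d)) in xc.
have [[d|y] [[d'|z] [yz yc zc /= ey ez]]] := two_nbrs _ xc;
  try by rewrite ?(negbTE (no_leaf d)) ?(negbTE (no_leaf d')) in yc zc.
have /= y_le := x_max _ yc; have /= z_le := x_max _ zc.
case/eqP: yz; congr inr; apply: ord_inj; move: ey ez => /orP[] /eqP ey /orP[] /eqP ez; lia.
Qed.

Lemma deg_inl i : deg cat_edge (inl i) = 1.
Proof.
rewrite /deg -(cards1 (inr (Ordinal (spine_of_lt i)) : cat_vertex)); congr #|pred_of_set _|.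
by apply/setP => -[i'|j]; rewrite !inE eqE /= -?val_eqE /= 1?[RHS]eq_sym.
Qed.

Lemma deg_inr j : deg cat_edge (inr j) = 3.
Proof.
have nbhd (a b c : cat_vertex) : a != b -> a != c -> b != c ->
    (forall w, cat_edge (inr j) w = [|| w == a, w == b | w == c]) ->
    deg cat_edge (inr j) = 3.
  move=> ab ac bc nbhd_j; rewrite /deg -(card_set3 ab ac bc).
  by congr #|pred_of_set _|; apply/setP => w; rewrite !inE nbhd_j orbA.
have j_lt := ltn_ord j.
have [j0|jN0] := eqVneq (j : nat) 0.
  apply: (nbhd (inl (inord 0)) (inl (inord 1)) (inr (inord 1))) => [|||[i|j']];
    rewrite ?eqE /= -?val_eqE /= ?inordK // /spine_of;
    try have := ltn_ord i; try have := ltn_ord j'; lia.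
have [jk|jNk] := eqVneq (j : nat) k.+1.
  apply: (nbhd (inl (inord k.+2)) (inl (inord k.+3)) (inr (inord k))) => [|||[i|j']];
    rewrite ?eqE /= -?val_eqE /= ?inordK // /spine_of;
    try have := ltn_ord i; try have := ltn_ord j'; lia.
apply: (nbhd (inl (inord j.+1)) (inr (inord j.-1)) (inr (inord j.+1))) => [|||[i|j']];
  rewrite ?eqE /= -?val_eqE /= ?inordK // /spine_of;
  try have := ltn_ord i; try have := ltn_ord j'; lia.
Qed.

Lemma is_leaf_inl i : is_leaf cat_edge (inl i).
Proof. by rewrite /is_leaf deg_inl. Qed.

Lemma is_leaf_inr j : is_leaf cat_edge (inr j) = false.
Proof. by rewrite /is_leaf deg_inr. Qed.

Lemma cherries_cat : #|cherries cat_edge| <= 2.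
Proof.
pose end_cherry (x y : nat) : {set cat_vertex} := [set inl (inord x); inl (inord y)].
apply: leq_trans (_ : #|[set end_cherry 0 1; end_cherry k.+2 k.+3]| <= 2);
  last by rewrite cards2; case: (_ != _).
apply/subset_leq_card/subsetP => C; rewrite inE.
case/existsP => a /existsP[b /and5P[/eqP-> ab la lb /existsP[w /andP[aw bw]]]].
case: a b ab la lb aw bw => [a|?] [b|?] ab; rewrite ?is_leaf_inr // => _ _.
case: w => [//|j] /eqP aj /eqP bj.
have ord_inord (i : 'I_k.+4) : i = inord i by apply: val_inj; rewrite /= inordK.
rewrite eqE /= in ab.
rewrite (ord_inord a) (ord_inord b) !inE /end_cherry.
have : [|| (a == 0 :> nat) && (b == 1 :> nat), (a == 1 :> nat) && (b == 0 :> nat),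
  (a == k.+2 :> nat) && (b == k.+3 :> nat) | (a == k.+3 :> nat) && (b == k.+2 :> nat)].
  by move: aj bj (ab : (a : nat) != b) (ltn_ord a) (ltn_ord b); rewrite /spine_of; lia.
by case/or4P => /andP[/eqP-> /eqP->]; rewrite ?eqxx ?orbT // setUC eqxx ?orbT.
Qed.

Lemma caterpillar_cat (X : finType) (lab : X -> 'I_k.+4) :
  injective lab -> #|X| = k.+4 -> caterpillar cat_edge (fun x => inl (lab x)).
Proof.
move=> lab_inj cardX.
have deg_interior v : ~~ is_leaf cat_edge v -> deg cat_edge v = 3.
  by case: v => [i|j]; rewrite ?is_leaf_inl // deg_inr.
have leaf_lab v : is_leaf cat_edge v = [exists x, inl (lab x) == v].
  case: v => [i|j]; last by rewrite is_leaf_inr; apply/esym/existsP => -[].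
  have /codomP[x ->] : i \in codom lab by apply: inj_card_onto; rewrite // card_ord cardX.
  by rewrite is_leaf_inl; apply/esym/existsP; exists x.
split; last exact: cherries_cat.
split; last exact: deg_interior.
split=> [|x y [/lab_inj] //|//|v /deg_interior ->//].
split; first by split; [exact: cat_edge_sym | exact: cat_edge_irr].
- exact: cat_connected.
- exact: cat_acyclic.
Qed.

End Caterpillar.

Lemma thin_family_of_thin (X : finType) (tau : {set {set X}}) :
  triples tau -> thin tau -> thin_family id tau.
Proof.
move=> tau_triples tau_thin; split=> [s /tau_triples ->//|J sJ nJ].
have -> : all_triples id J by apply/forall_inP => s /(subsetP sJ) /tau_triples ->.
by rewrite addn1 -addn2; apply: tau_thin.
Qed.

Section LeafOrder.
Variables (X : finType) (k : nat) (r : X -> nat).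
Hypotheses (r_inj : injective r) (cardX : #|X| = k.+4).

Definition rank_pos (z : X) : nat := #|[set w | r w < r z]|.

Definition leaf_index (z : X) : 'I_k.+4 := inord (rank_pos z).

Lemma rank_pos_lt z : rank_pos z < k.+4.
Proof.
rewrite -cardX -cardsT; apply/proper_card/properP; split; first exact: subsetT.
by exists z; rewrite !inE ?ltnn.
Qed.

Lemma rank_pos_mono a b : r a < r b -> rank_pos a < rank_pos b.
Proof.
move=> ab; apply/proper_card/properP; split; last by exists a; rewrite !inE ?ltnn.
by apply/subsetP => w; rewrite !inE => /ltn_trans; apply.
Qed.

Lemma rank_pos_inj : injective rank_pos.
Proof.
move=> a b ab; apply/r_inj/eqP; rewrite eqn_leq.
by apply/andP; split; rewrite leqNgt; apply/negP => /rank_pos_mono; rewrite ab ltnn.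
Qed.

Lemma leaf_indexE z : leaf_index z = rank_pos z :> nat.
Proof. by rewrite inordK // rank_pos_lt. Qed.

Lemma leaf_index_inj : injective leaf_index.
Proof. by move=> a b /(congr1 val); rewrite /= !leaf_indexE => /rank_pos_inj. Qed.

Lemma is_second_triple (s : {set X}) m : #|s| = 3 -> is_second r s m ->
  exists l h, [/\ l \in s, h \in s, r l < r m & r m < r h].
Proof.
move=> s3 /andP[ms /cards1P[l below_m]].
have : l \in [set w in s | r w < r m] by rewrite below_m set11.
rewrite inE => /andP[ls lm].
have : ~~ (s \subset [set l; m]).
  by apply/negP => /subset_leq_card; rewrite s3 cards2; case: (_ != _).
case/subsetPn => h hs; rewrite !inE negb_or => /andP[hl hm].
exists l, h; split=> //.
have [//|hm'|/r_inj mh] := ltngtP (r m) (r h); last by rewrite mh eqxx in hm.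
have : h \in [set w in s | r w < r m] by rewrite inE hs hm'.
by rewrite below_m inE (negbTE hl).
Qed.

Lemma median_level (s : {set X}) m v : #|s| = 3 -> is_second r s m ->
  is_med (@cat_edge k) (fun z => inl (leaf_index z)) s v ->
  level v = (rank_pos m).-1 /\ 0 < rank_pos m.
Proof.
move=> s3 sm med_v; have [l [h [ls hs lm mh]]] := is_second_triple s3 sm.
have ms : m \in s by case/andP: sm.
have neq x y : r x < r y -> x != y by move=> xy; apply: contraTneq xy => ->; rewrite ltnn.
have idx x y : r x < r y -> leaf_index x < leaf_index y.
  by move/rank_pos_mono; rewrite !leaf_indexE.
have := median_leaves_level (idx _ _ lm) (idx _ _ mh) (med_v _ _ ls ms (neq _ _ lm))
  (med_v _ _ ms hs (neq _ _ mh)) (med_v _ _ ls hs (neq _ _ (ltn_trans lm mh))).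
have := rank_pos_mono lm; have := rank_pos_mono mh; have := rank_pos_lt h.
by rewrite leaf_indexE /spine_of; lia.
Qed.

End LeafOrder.

Theorem theorem2 (X : finType) (tau : {set {set X}}) :
  4 <= #|X| -> triples tau -> tau != set0 -> thin tau ->
  exists (V : finType) (e : rel V) (lab : X -> V),
    caterpillar e lab /\
    (forall s1 s2 v, s1 \in tau -> s2 \in tau ->
       is_med e lab s1 v -> is_med e lab s2 v -> s1 = s2).
Proof.
move=> cardX4 tau_triples _ tau_thin.
have [k cardX] : exists k, #|X| = k.+4 by exists (#|X| - 4); lia.
have /card_gt0P[x0 _] : 0 < #|X| by rewrite cardX.
have [r [r_inj [md [md_second md_inj]]]] :=
  distinct_seconds_exists x0 (thin_family_of_thin tau_triples tau_thin).
exists (cat_vertex k), (@cat_edge k), (fun z => inl (leaf_index k r z)); split.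
  exact: caterpillar_cat (leaf_index_inj r_inj cardX) cardX.
move=> s1 s2 v s1_tau s2_tau med1 med2; apply: md_inj => //.
have [level1 pos1] := median_level r_inj cardX (tau_triples _ s1_tau) (md_second _ s1_tau) med1.
have [level2 pos2] := median_level r_inj cardX (tau_triples _ s2_tau) (md_second _ s2_tau) med2.
by apply: (rank_pos_inj r_inj); lia.
Qed.
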